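(* Let $F$ be the distribution function of a random variable $X\ge0$ with $EX=\infty$ such that $F(0)=0$, $F(2)=0.4$, $F(4)=0.8$ and $F(3)<0.48$. Then $F\notin\mathcal{D}^-$.
   Context: For real random variables, $X \le_{st} Y$ means $P(X\le t)\ge P(Y\le t)$ for all $t\in\mathbb{R}$. A distribution function $F_X$ belongs to $\mathcal{D}^-$ if for every $n\in\mathbb{N}$, all $\theta_1,\dots,\theta_n\ge 0$ with $\sum_{i=1}^n\theta_i=1$, and i.i.d. random variables $X_1,\dots,X_n$ with distribution $F_X$, we have $X_1\le_{st}\sum_{i=1}^n\theta_iX_i$. *)

From HB Require Import structures.
From mathcomp Require Import all_boot all_order all_algebra.
From mathcomp Require Import all_classical all_reals all_analysis.
Set Implicit Arguments. Unset Strict Implicit. Unset Printing Implicit Defensive.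
Import Order.TTheory GRing.Theory Num.Theory.
Local Open Scope classical_set_scope.
Local Open Scope ring_scope.

Definition has_cdf {d} {T : measurableType d} {R : realType}
  (P : probability T R) (X : T -> R) (F : R -> R) : Prop :=
  forall t : R, P (X @^-1` `]-oo, t]) = (F t)%:E.

(* mutual independence of a finite family of real random variables:
   the product rule for all Borel sets (taking B i = setT recovers every
   subfamily) *)
Definition mutually_independent {d} {T : measurableType d} {R : realType}
  (P : probability T R) (n : nat) (Xs : 'I_n -> T -> R) : Prop :=
  forall B : 'I_n -> set R, (forall i, measurable (B i)) ->
    P (\bigcap_(i in [set: 'I_n]) (Xs i @^-1` B i)) =
    (\prod_(i < n) P (Xs i @^-1` B i))%E.

Definition st_le {d} {T : measurableType d} {R : realType}
  (P : probability T R) (X Y : T -> R) : Prop :=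
  forall t : R, (P (Y @^-1` `]-oo, t]) <= P (X @^-1` `]-oo, t]))%E.

(* F belongs to D^- : for every n >= 1 (indices 'I_n.+1, X_1 = index 0),
   weights theta >= 0 summing to 1, and i.i.d. X_1..X_n with distribution F
   (on any probability space), X_1 <=_st sum_i theta_i X_i. *)
Definition in_Dminus {R : realType} (F : R -> R) : Prop :=
  forall (n : nat) (theta : 'I_n.+1 -> R),
    (forall i, 0 <= theta i) -> \sum_(i < n.+1) theta i = 1 ->
    forall (d : measure_display) (T : measurableType d) (P : probability T R)
      (Xs : 'I_n.+1 -> {RV P >-> R}),
      (forall i, has_cdf P (Xs i) F) ->
      mutually_independent P (fun i => (Xs i : T -> R)) ->
      st_le P (Xs ord0) (fun w => \sum_(i < n.+1) theta i * Xs i w).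

From HB Require Import structures.
From mathcomp Require Import all_boot all_order all_algebra.
From mathcomp Require Import all_classical all_reals all_analysis.
From mathcomp Require Import measurable_realfun lra.
Import Order.TTheory GRing.Theory Num.Theory.
Local Open Scope classical_set_scope.
Local Open Scope ring_scope.

(* Take two independent copies X1, X2 of X (the coordinates of the product
   space P x P) and the weights (1/2, 1/2).  The event {(X1 + X2)/2 <= 3}
   contains the disjoint union of {X1 <= 2, X2 <= 4} and {2 < X1 <= 4, X2 <= 2},
   of probability F(2) F(4) + (F(4) - F(2)) F(2) = 12/25 > F(3); hence
   X1 <=_st (X1 + X2)/2 fails at t = 3. *)

Section two_independent_copies.
Context {d : measure_display} {T : measurableType d} {R : realType}.
Context (P : probability T R) (X : {mfun T >-> R}).

Definition fst_copy : T * T -> R := X \o fst.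
Definition snd_copy : T * T -> R := X \o snd.

Lemma measurable_fst_copy : measurable_fun setT fst_copy.
Proof. exact: measurableT_comp (measurable_funPT X) measurable_fst. Qed.

Lemma measurable_snd_copy : measurable_fun setT snd_copy.
Proof. exact: measurableT_comp (measurable_funPT X) measurable_snd. Qed.

HB.instance Definition _ :=
  isMeasurableFun.Build _ _ _ _ fst_copy measurable_fst_copy.
HB.instance Definition _ :=
  isMeasurableFun.Build _ _ _ _ snd_copy measurable_snd_copy.

Lemma fst_copy_preimage B : fst_copy @^-1` B = (X @^-1` B) `*` setT.
Proof. by apply/seteqP; split=> -[a b] //= []. Qed.

Lemma snd_copy_preimage B : snd_copy @^-1` B = setT `*` (X @^-1` B).
Proof. by apply/seteqP; split=> -[a b] //= []. Qed.

Lemma product_probability_setXT A :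
  measurable A -> (P \x P)%E (A `*` setT) = P A.
Proof.
move=> mA; rewrite product_measure1E // -[RHS]mule1.
by congr (_ * _)%E; exact: probability_setT.
Qed.

Lemma product_probability_setTX A :
  measurable A -> (P \x P)%E (setT `*` A) = P A.
Proof.
move=> mA; rewrite product_measure1E // -[RHS]mul1e.
by congr (_ * _)%E; exact: probability_setT.
Qed.

Definition two_copies (i : 'I_2) : {RV (P \x P)%E >-> R} :=
  if val i == 0%N then fst_copy : {RV (P \x P)%E >-> R} else snd_copy.

Lemma has_cdf_two_copies F : has_cdf P X F ->
  forall i, has_cdf (P \x P)%E (two_copies i) F.
Proof.
move=> XF i t; have mXt := measurable_funPTI X (measurable_itv `]-oo, t]).
rewrite /two_copies; case: ifP => _.
- by rewrite /= fst_copy_preimage product_probability_setXT ?XF.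
- by rewrite /= snd_copy_preimage product_probability_setTX ?XF.
Qed.

Lemma two_copies_independent :
  mutually_independent (P \x P)%E (fun i => (two_copies i : T * T -> R)).
Proof.
move=> B mB; have i1 : (1 < 2)%N by [].
have -> : \bigcap_(i in [set: 'I_2]) (two_copies i @^-1` B i) =
    (X @^-1` B ord0) `*` (X @^-1` B (Ordinal i1)).
  apply/seteqP; split=> [[a b] h|[a b] [h0 h1] [[|[|//]] Hi] _] /=.
  - by split; [exact: (h ord0 I) | exact: (h (Ordinal i1) I)].
  - by rewrite (_ : Ordinal Hi = ord0) //; exact: val_inj.
  - by rewrite (_ : Ordinal Hi = Ordinal i1) //; exact: val_inj.
rewrite big_ord_recl big_ord1 /two_copies /=.
rewrite fst_copy_preimage snd_copy_preimage.
rewrite product_probability_setXT ?product_probability_setTX;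
  try exact: measurable_funPTI.
rewrite product_measure1E; try exact: measurable_funPTI.
by congr (_ * P (_ @^-1` B _))%E; exact: val_inj.
Qed.

Definition average_copies_le t := [set w : T * T | (X w.1 + X w.2) / 2 <= t].

Lemma measurable_average_copies_le t : measurable (average_copies_le t).
Proof.
have mavg : measurable_fun setT (fun w : T * T => (X w.1 + X w.2) / 2).
  apply: measurable_funM => //; apply: measurable_funD.
  - exact: measurable_fst_copy.
  - exact: measurable_snd_copy.
have := mavg measurableT _ (measurable_itv `]-oo, t]).
rewrite setTI; congr measurable; apply/seteqP; split=> w /=; rewrite in_itv //.
Qed.

Lemma in_Dminus_average_two_copies F : in_Dminus F -> has_cdf P X F ->
  forall t, ((P \x P)%E (average_copies_le t) <= (F t)%:E)%E.
Proof.
move=> DF XF t.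
have half_sum : \sum_(i < 2) 2^-1 = 1 :> R by rewrite big_ord_recl big_ord1; lra.
have half_ge0 (i : 'I_2) : 0 <= 2^-1 :> R by rewrite invr_ge0.
have -> : average_copies_le t =
    (fun w => \sum_(i < 2) 2^-1 * two_copies i w) @^-1` `]-oo, t].
  apply/seteqP; split=> w;
  by rewrite /= in_itv /= big_ord_recl big_ord1 /two_copies /= -mulrDr mulrC.
rewrite -(has_cdf_two_copies _ XF ord0).
exact: DF 1%N (fun=> 2^-1) half_ge0 half_sum _ _ _ two_copies
  (has_cdf_two_copies _ XF) two_copies_independent t.
Qed.

Lemma average_two_copies_lower_bound F a b : has_cdf P X F -> a <= b ->
  ((F a * F b + (F b - F a) * F a)%R%:E <=
   (P \x P)%E (average_copies_le ((a + b) / 2)%R))%E.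
Proof.
move=> XF ab; pose A t := X @^-1` `]-oo, t].
have mA t : measurable (A t) := measurable_funPTI X (measurable_itv _).
have PA t : P (A t) = (F t)%:E := XF t.
have Aab : A a `<=` A b by move=> w; rewrite /A /= !in_itv /=; lra.
have mAba : measurable (A b `\` A a) by exact: measurableD.
have PAba : P (A b `\` A a) = (F b - F a)%:E.
  rewrite measureD //; last exact: le_lt_trans (probability_le1 _ _) (ltry 1).
  by rewrite setIidr // EFinB; congr (_ - _)%E; exact: PA.
rewrite EFinD !EFinM -!PA -PAba -!product_measure1E // -measureU //;
  try exact: measurableX.
- apply: le_measure; rewrite ?inE.
  + by apply: measurableU; apply: measurableX.
  + exact: measurable_average_copies_le.
  + move=> -[w1 w2]; rewrite /A /average_copies_le /= !in_itv /=.
    by case=> [[h1 h2]|[[h1 _] h2]]; lra.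
- by apply/seteqP; split=> [[w1 w2] [[h1 h2] [[h3 h4] h5]]|].
Qed.

End two_independent_copies.

Theorem mainTheorem11 (R : realType) (d : measure_display) (T : measurableType d)
  (P : probability T R) (X : {RV P >-> R}) (F : R -> R) :
  (forall w, 0 <= X w) ->
  ('E_P[X] = +oo)%E ->
  has_cdf P X F ->
  F 0 = 0 -> F 2 = 2 / 5 -> F 4 = 4 / 5 -> F 3 < 12 / 25 ->
  ~ in_Dminus F.
Proof.
move=> _ _ XF _ F2 F4 F3 DF.
have upper := in_Dminus_average_two_copies P X F DF XF 3.
have lower := average_two_copies_lower_bound P X F 2 4 XF ltac:(lra).
rewrite F2 F4 (_ : (2 + 4) / 2 = 3 :> R) in lower; last by lra.
by have := le_trans lower upper; rewrite lee_fin; lra.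
Qed.
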